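(* Let $\mathcal M=(h,M)$ be a polymatroid, $a\in M$, and $\alpha_1,\alpha_2\ge0$ real numbers with $\alpha_1+\alpha_2=h(a)$. Then there is a polymatroid $\mathcal M'=(h',\{a_1,a_2\}\cup(M\setminus\{a\}))$ (with $a_1,a_2$ new elements) such that $h'(a_i)=\alpha_i$ for $i=1,2$, and $\mathcal M$ is the factor of $\mathcal M'$ obtained by collapsing $a_1$ and $a_2$ to $a$ (i.e. $h'(A)=h(A)$ and $h'(a_1a_2A)=h(aA)$ for $A\subseteq M\setminus\{a\}$). Moreover, $\mathcal M$ is almost entropic if and only if $\mathcal M'$ is almost entropic.
   Context: A polymatroid $(h,M)$ consists of a finite set $M$ and a function $h$ on subsets of $M$ with $h(\emptyset)=0$ that is non-negative, monotone and submodular. It is almost entropic if, as a vector in $\mathbb R^{2^{|M|}-1}$, it lies in the closure of the entropic polymatroids (those of the form $A\mapsto\mathbf H(\xi_A)$ for jointly distributed discrete random variables). Juxtaposition denotes union, e.g. $a_1a_2A=\{a_1,a_2\}\cup A$. Given an equivalence relation $\cong$ on the ground set with quotient map $\phi$, the factor is the polymatroid $A\mapsto h(\phi^{-1}(A))$ on the set of classes. *)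

From mathcomp Require Import all_boot.
From Stdlib Require Import Reals.

Set Implicit Arguments.
Unset Strict Implicit.
Unset Printing Implicit Defensive.

Local Open Scope R_scope.

Definition polymatroid (T : finType) (h : {set T} -> R) : Prop :=
  [/\ h set0 = 0,
      (forall A, 0 <= h A),
      (forall A B : {set T}, A \subset B -> h A <= h B) &
      (forall A B : {set T}, h (A :|: B) + h (A :&: B) <= h A + h B)].

Definition distribution (Omega : finType) (p : Omega -> R) : Prop :=
  (forall w, 0 <= p w) /\ \big[Rplus/0]_(w : Omega) p w = 1.

Definition log2 (x : R) : R := ln x / ln 2.

Definition joint (T Omega : finType) (xi : T -> Omega -> nat) (A : {set T})
  (w : Omega) : {ffun T -> option nat} :=
  [ffun i => if i \in A then Some (xi i w) else None].

Definition prob_joint (T Omega : finType) (p : Omega -> R)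
  (xi : T -> Omega -> nat) (A : {set T}) (v : {ffun T -> option nat}) : R :=
  \big[Rplus/0]_(w : Omega | joint xi A w == v) p w.

Definition entropy (T Omega : finType) (p : Omega -> R)
  (xi : T -> Omega -> nat) (A : {set T}) : R :=
  - \big[Rplus/0]_(v <- undup [seq joint xi A w | w <- enum Omega])
      (prob_joint p xi A v * log2 (prob_joint p xi A v)).

Definition entropic (T : finType) (h : {set T} -> R) : Prop :=
  exists (Omega : finType) (p : Omega -> R) (xi : T -> Omega -> nat),
    distribution p /\ forall A : {set T}, h A = entropy p xi A.

Definition almost_entropic (T : finType) (h : {set T} -> R) : Prop :=
  forall eps : R, 0 < eps ->
    exists g : {set T} -> R, entropic g /\ forall A : {set T}, Rabs (g A - h A) < eps.

(* Encoding of the ground set {a1,a2} ∪ (M \ {a}) as option M: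
   a1 := Some a, a2 := None, and x ∈ M \ {a} is Some x.
   collapse a is the quotient map identifying a1 and a2 with a. *)
Definition collapse (M : finType) (a : M) (o : option M) : M :=
  match o with None => a | Some x => x end.

Definition factor (M : finType) (phi : option M -> M) (h' : {set option M} -> R)
  : {set M} -> R := fun B => h' (phi @^-1: B).

(* The rank function h' := t (h o i1^-1) + (1 - t) (h o i2^-1), where i1 and i2
   embed M by sending a to a1 and to a2 respectively, is a convex combination of
   two polymatroids whose factor is h, with h'(a1) = t h(a) and
   h'(a2) = (1 - t) h(a).  Factors of entropic functions are entropic (group
   the variables of each class), so h inherits almost entropicity from h'.
   Conversely, almost entropic functions are closed under sums (independent
   products) and under scaling by t in [0,1]: t g is approximated by revealing
   2^k g with probability t / 2^k and a constant otherwise, at the cost of the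
   entropy of the selector, which is O(k / 2^k). *)

From HB Require Import structures.
From mathcomp Require Import all_boot.
From Stdlib Require Import Reals Lra FunctionalExtensionality.

Set Implicit Arguments.
Unset Strict Implicit.
Unset Printing Implicit Defensive.

Local Open Scope R_scope.

Lemma RplusA : associative Rplus. Proof. by move=> *; ring. Qed.
Lemma RmultA : associative Rmult. Proof. by move=> *; ring. Qed.

HB.instance Definition _ :=
  Monoid.isComLaw.Build R 0 Rplus RplusA Rplus_comm Rplus_0_l.
HB.instance Definition _ :=
  Monoid.isComLaw.Build R 1 Rmult RmultA Rmult_comm Rmult_1_l.
HB.instance Definition _ := Monoid.isMulLaw.Build R 0 Rmult Rmult_0_l Rmult_0_r.
HB.instance Definition _ :=
  Monoid.isAddLaw.Build R Rmult Rplus Rmult_plus_distr_r Rmult_plus_distr_l.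

Lemma sumR_le (I : Type) (r : seq I) (P : pred I) (F G : I -> R) :
  (forall i, P i -> F i <= G i) ->
  \big[Rplus/0]_(i <- r | P i) F i <= \big[Rplus/0]_(i <- r | P i) G i.
Proof.
move=> FG; elim/big_rec2: _ => [|i x y Pi]; first lra.
by have := FG i Pi; lra.
Qed.

Lemma sumR_ge0 (I : Type) (r : seq I) (P : pred I) (F : I -> R) :
  (forall i, P i -> 0 <= F i) -> 0 <= \big[Rplus/0]_(i <- r | P i) F i.
Proof.
move=> F0; elim/big_rec: _ => [|i x Pi]; first lra.
by have := F0 i Pi; lra.
Qed.

Lemma ln_le_sub1 x : 0 < x -> ln x <= x - 1.
Proof. by move=> x0; have := exp_ineq1_le (ln x); rewrite exp_ln //; lra. Qed.

Lemma inv_ln2_bounds : 0 < / ln 2 < 2.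
Proof.
have ln2 := ln_lt_2; split; first by apply: Rinv_0_lt_compat; lra.
have := Rinv_lt_contravar (/ 2) (ln 2) ltac:(nra) ln2.
by rewrite Rinv_inv.
Qed.

Lemma inv_pow2_bounds k : 0 < / 2 ^ k <= 1.
Proof.
have k1 : 1 <= 2 ^ k by apply: pow_R1_Rle; lra.
split; first by apply: Rinv_0_lt_compat; lra.
by rewrite -Rinv_1; apply: Rinv_le_contravar; lra.
Qed.

Lemma log2_le0 x : 0 < x <= 1 -> log2 x <= 0.
Proof.
move=> [x0 x1]; have := ln_le_sub1 x0; have [? _] := inv_ln2_bounds.
rewrite /log2 /Rdiv; nra.
Qed.

Lemma log2_mult x y : 0 < x -> 0 < y -> log2 (x * y) = log2 x + log2 y.
Proof. by move=> x0 y0; rewrite /log2 ln_mult // /Rdiv Rmult_plus_distr_r. Qed.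

Lemma log2_div_pow2 x k : 0 < x -> log2 (x / 2 ^ k) = log2 x - INR k.
Proof.
move=> x0; have k0 : 0 < 2 ^ k by apply: pow_lt; lra.
have ln2 := ln_lt_2.
rewrite /Rdiv log2_mult //; last exact: Rinv_0_lt_compat.
by rewrite /log2 ln_Rinv // ln_pow; [field|]; lra.
Qed.

Lemma neg_xlog2x_le x : 0 <= x <= 1 -> - (x * log2 x) <= 2 * (1 - x).
Proof.
move=> [x0 x1]; have [c0 c2] := inv_ln2_bounds.
have [{}x0|<-] := Rle_lt_or_eq_dec _ _ x0; last lra.
have lnV := ln_le_sub1 (Rinv_0_lt_compat _ x0).
rewrite ln_Rinv // in lnV.
have xV : x * / x = 1 by field; lra.
(* -x ln x = x ln (1/x) <= 1 - x *)
have : - (x * ln x) <= 1 - x by nra.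
rewrite /log2 /Rdiv; nra.
Qed.

Section RandomVariableEntropy.

Variables (O : finType) (p : O -> R).

Definition fiber_mass (V : eqType) (f : O -> V) (w : O) : R :=
  \big[Rplus/0]_(w' | f w' == f w) p w'.

Definition ent (V : eqType) (f : O -> V) : R :=
  - \big[Rplus/0]_w (p w * log2 (fiber_mass f w)).

Lemma ent_ext (V1 V2 : eqType) (f : O -> V1) (g : O -> V2) :
  (forall w w', (f w' == f w) = (g w' == g w)) -> ent f = ent g.
Proof.
move=> fg; rewrite /ent; congr (- _); apply: eq_bigr => w _.
by rewrite /fiber_mass (eq_bigl (fun w' => g w' == g w)) // => w'; rewrite fg.
Qed.

Lemma ent_idfun : ent idfun = - \big[Rplus/0]_w (p w * log2 (p w)).
Proof.
by congr (- _); apply: eq_bigr => w _; rewrite /fiber_mass big_pred1_eq.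
Qed.

Hypothesis p_distr : distribution p.

Lemma fiber_mass_ge (V : eqType) (f : O -> V) w : p w <= fiber_mass f w.
Proof.
have [p0 _] := p_distr; rewrite /fiber_mass (bigD1 w) //=.
suff : 0 <= \big[Rplus/0]_(w' | (f w' == f w) && (w' != w)) p w' by lra.
exact: sumR_ge0.
Qed.

Lemma fiber_mass_le1 (V : eqType) (f : O -> V) w : fiber_mass f w <= 1.
Proof.
have [p0 <-] := p_distr; rewrite /fiber_mass big_mkcond /=.
by apply: sumR_le => w' _; case: ifP => _; [lra|apply: p0].
Qed.

Lemma ent_ge0 (V : eqType) (f : O -> V) : 0 <= ent f.
Proof.
have [p0 _] := p_distr.
suff : \big[Rplus/0]_w (p w * log2 (fiber_mass f w)) <= 0 by rewrite /ent; lra.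
apply: (Rle_trans _ (\big[Rplus/0]_(w : O) 0)); last by rewrite big1 //; lra.
apply: sumR_le => w _; have [pw|<-] := Rle_lt_or_eq_dec _ _ (p0 w); last lra.
have := fiber_mass_ge f w; have := fiber_mass_le1 f w.
have := @log2_le0 (fiber_mass f w); nra.
Qed.

Lemma ent_const (V : eqType) (f : O -> V) :
  (forall w w', f w = f w') -> ent f = 0.
Proof.
have [_ p1] := p_distr; move=> fc; rewrite /ent big1 ?Ropp_0 // => w _.
rewrite /fiber_mass (eq_bigl predT) ?p1 ?/log2 ?ln_1; first lra.
by move=> w'; rewrite /= (fc w' w) eqxx.
Qed.

End RandomVariableEntropy.

Lemma entropyE (T O : finType) (p : O -> R) (xi : T -> O -> nat) A :
  entropy p xi A = ent p (joint xi A).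
Proof.
rewrite /entropy /ent; congr (- _); set j := joint xi A.
have j_mem w : j w \in undup [seq j w | w <- enum O].
  by rewrite mem_undup; apply: map_f; rewrite mem_enum.
transitivity (\big[Rplus/0]_(v <- undup [seq j w | w <- enum O])
  \big[Rplus/0]_(w | j w == v) (p w * log2 (fiber_mass p j w))).
  apply: eq_bigr => v _; rewrite /prob_joint big_distrl /=.
  apply: eq_bigr => w /eqP jw; congr (_ * log2 _).
  by apply: eq_bigl => w'; rewrite /= -jw.
rewrite (exchange_big_dep predT) //=; apply: eq_bigr => w _.
rewrite big_mkcond (bigD1_seq (j w)) ?undup_uniq //= eqxx big1 ?Rplus_0_r //.
by move=> v; rewrite eq_sym => /negbTE ->.
Qed.

Section ProductSpace.

Variables (O1 O2 : finType) (p1 : O1 -> R) (p2 : O2 -> R).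

Definition prod_distr (w : O1 * O2) : R := p1 w.1 * p2 w.2.

Lemma distribution_prod :
  distribution p1 -> distribution p2 -> distribution prod_distr.
Proof.
move=> [p10 s1] [p20 s2]; split=> [w|]; first exact: Rmult_le_pos.
rewrite /prod_distr -(pair_big predT predT (fun a b => p1 a * p2 b)) /=.
rewrite (eq_bigr (fun a => p1 a * 1)) => [|a _]; last first.
  by rewrite -big_distrr /= s2.
by rewrite -big_distrl /= s1 Rmult_1_l.
Qed.

Variables (V1 V2 : eqType) (G : O1 -> V1) (F : O1 -> O2 -> V2).
Hypothesis F_fiberwise : forall w1 w1', G w1' = G w1 -> F w1' =1 F w1.

Lemma fiber_mass_prod w1 w2 :
  fiber_mass prod_distr (fun w => (G w.1, F w.1 w.2)) (w1, w2)
  = fiber_mass p1 G w1 * fiber_mass p2 (F w1) w2.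
Proof.
rewrite /fiber_mass /prod_distr big_mkcond /=.
rewrite -(pair_big predT predT (fun a b =>
  if (G a, F a b) == (G w1, F w1 w2) then p1 a * p2 b else 0)) /=.
rewrite [X in _ = X * _]big_mkcond big_distrl /=; apply: eq_bigr => a _.
case: eqP => [Ga|nGa]; last first.
  by rewrite Rmult_0_l big1 // => b _; case: eqP => // - [].
rewrite big_distrr [RHS]big_mkcond /=; apply: eq_bigr => b _.
have -> : ((G a, F a b) == (G w1, F w1 w2)) = (F w1 b == F w1 w2).
  by rewrite (F_fiberwise Ga b) Ga; apply/eqP/eqP => [[]|->].
by case: (_ == _); ring.
Qed.

(* Chain rule: H(G, F) = H(G) + H(F | G), the conditional entropy being an
   average over the first factor because F w1 only depends on G w1. *)
Lemma ent_prod :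
  distribution p1 -> distribution p2 ->
  ent prod_distr (fun w => (G w.1, F w.1 w.2))
  = ent p1 G + \big[Rplus/0]_w1 (p1 w1 * ent p2 (F w1)).
Proof.
move=> d1 d2; have [p10 _] := d1; have [p20 s2] := d2.
pose L1 a := log2 (fiber_mass p1 G a).
pose L2 a b := log2 (fiber_mass p2 (F a) b).
transitivity (- \big[Rplus/0]_(w : O1 * O2)
    ((fun a b => p1 a * p2 b * L1 a + p1 a * (p2 b * L2 a b)) w.1 w.2)).
  congr (- _); apply: eq_bigr => [[a b]] _ /=.
  rewrite fiber_mass_prod /prod_distr.
  have [pa|<-] := Rle_lt_or_eq_dec _ _ (p10 a); last ring.
  have [pb|<-] := Rle_lt_or_eq_dec _ _ (p20 b); last ring.
  have := fiber_mass_ge d1 G a; have := fiber_mass_ge d2 (F a) b.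
  by move=> *; rewrite /= log2_mult /L1 /L2; try lra; ring.
rewrite -(pair_big predT predT
  (fun a b => p1 a * p2 b * L1 a + p1 a * (p2 b * L2 a b))) /=.
rewrite (eq_bigr (fun a => p1 a * L1 a + p1 a * (- ent p2 (F a)))) => [|a _];
  last first.
  by rewrite big_split /= -big_distrl /= -!big_distrr /= s2 /ent /L2; ring.
rewrite big_split /= Ropp_plus_distr /ent; congr (_ + _).
rewrite (big_morph Ropp Ropp_plus_distr Ropp_0); apply: eq_bigr => a _; ring.
Qed.

End ProductSpace.

Lemma eq_joint (T O : finType) (xi : T -> O -> nat) (A : {set T}) w w' :
  joint xi A w = joint xi A w' <-> {in A, forall x, xi x w = xi x w'}.
Proof.
split=> [/ffunP jw x xA | xiw]; last first.
  by apply/ffunP => x; rewrite !ffunE; case: ifP => // /xiw ->.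
by have := jw x; rewrite !ffunE xA => -[].
Qed.

Lemma entropic_ext (T : finType) (f g : {set T} -> R) :
  (forall A, f A = g A) -> entropic f -> entropic g.
Proof.
by move=> fg [O [p [xi [dp E]]]]; exists O, p, xi; split => // A; rewrite -fg.
Qed.

Lemma entropic_set0 (T : finType) (g : {set T} -> R) : entropic g -> g set0 = 0.
Proof.
move=> [O [p [xi [dp ->]]]]; rewrite entropyE; apply: ent_const => // w w'.
by apply/eq_joint => x; rewrite inE.
Qed.

(* The variable of the class y is the list of the xi x with phi x = y, coded
   as a natural number. *)
Definition relabel (T1 T2 O : finType) (phi : T1 -> T2) (xi : T1 -> O -> nat)
  (y : T2) (w : O) : nat :=
  pickle [seq xi x w | x <- enum T1 & phi x == y].

Lemma entropy_relabel (T1 T2 O : finType) (p : O -> R) (phi : T1 -> T2)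
  (xi : T1 -> O -> nat) (B : {set T2}) :
  entropy p (relabel phi xi) B = entropy p xi (phi @^-1: B).
Proof.
rewrite !entropyE; apply: ent_ext => w w'; apply/eqP/eqP; rewrite !eq_joint.
  move=> E x; rewrite inE => /E /(pcan_inj pickleK) /eq_in_map; apply.
  by rewrite mem_filter eqxx mem_enum.
move=> E y yB; congr pickle; apply/eq_in_map => x.
by rewrite mem_filter => /andP[/eqP phix _]; apply: E; rewrite inE phix.
Qed.

Lemma entropic_preimage (T1 T2 : finType) (phi : T1 -> T2) (g : {set T1} -> R) :
  entropic g -> entropic (fun B => g (phi @^-1: B)).
Proof.
move=> [O [p [xi [dp E]]]]; exists O, p, (relabel phi xi); split => // B.
by rewrite entropy_relabel E.
Qed.

Lemma entropic_add (T : finType) (f1 f2 : {set T} -> R) :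
  entropic f1 -> entropic f2 -> entropic (fun A => f1 A + f2 A).
Proof.
move=> [O1 [p1 [xi1 [d1 E1]]]] [O2 [p2 [xi2 [d2 E2]]]].
exists (O1 * O2)%type, (prod_distr p1 p2),
  (fun x w => pickle (xi1 x w.1, xi2 x w.2)).
split=> [|A]; first exact: distribution_prod.
have [_ s1] := d1.
rewrite E1 E2 !entropyE (@ent_ext _ _ _ _ _
  (fun w : O1 * O2 => (joint xi1 A w.1, (fun _ => joint xi2 A) w.1 w.2))).
  rewrite (@ent_prod _ _ _ _ _ _ (joint xi1 A) (fun _ => joint xi2 A)) //.
  by rewrite -big_distrl /= s1 Rmult_1_l.
move=> w w'; apply/eqP/eqP => [/eq_joint E | [/eq_joint E1' /eq_joint E2']].
  by congr pair; apply/eq_joint => x /E /(pcan_inj pickleK) [].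
by apply/eq_joint => x xA; rewrite E1' ?E2'.
Qed.

Lemma entropic_pow2 (T : finType) (g : {set T} -> R) k :
  entropic g -> entropic (fun A => 2 ^ k * g A).
Proof.
move=> eg; elim: k => [|k IH]; first by apply: entropic_ext eg => A /=; ring.
by apply: entropic_ext (entropic_add IH IH) => A /=; ring.
Qed.

(* Mixture of the realisations xi s selected by an independent variable s ~ q,
   which is revealed whenever B is nonempty. *)
Lemma entropic_mixture (T S O : finType) (q : S -> R) (p : O -> R)
  (xi : S -> T -> O -> nat) :
  distribution q -> distribution p ->
  entropic (fun B => if B == set0 then 0
    else ent q idfun + \big[Rplus/0]_s (q s * entropy p (xi s) B)).
Proof.
move=> dq dp; exists (S * O)%type, (prod_distr q p),
  (fun x w => pickle (w.1, xi w.1 x w.2)).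
have dqp := distribution_prod dq dp.
split=> // B; rewrite entropyE; case: eqP => [->|/eqP /set0Pn [x0 x0B]].
  by symmetry; apply: ent_const => // w w'; apply/eq_joint => x; rewrite inE.
rewrite (@ent_ext _ _ _ _ _
  (fun w : S * O => (idfun w.1, (fun s => joint (xi s) B) w.1 w.2))).
  have fib s s' : idfun s' = idfun s -> joint (xi s') B =1 joint (xi s) B.
    by rewrite /= => ->.
  rewrite (ent_prod fib) //.
  by congr (_ + _); apply: eq_bigr => s _; rewrite entropyE.
move=> [s o] [s' o']; apply/eqP/eqP => [/eq_joint E | [-> /eq_joint E]].
  have [/= ss' _] := pcan_inj pickleK (E x0 x0B); subst s'.
  by congr pair; apply/eq_joint => x /E /(pcan_inj pickleK) [].
by apply/eq_joint => x /E /= ->.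
Qed.

Definition bern (u : R) (b : bool) : R := if b then u else 1 - u.

Lemma distribution_bern u : 0 <= u <= 1 -> distribution (bern u).
Proof. by move=> u01; split=> [[] /=|]; rewrite ?big_bool /=; lra. Qed.

Lemma ent_bern u :
  ent (bern u) idfun = - (u * log2 u) - ((1 - u) * log2 (1 - u)).
Proof. by rewrite ent_idfun big_bool /=; ring. Qed.

Lemma ent_bern_le k c :
  0 <= c <= 1 -> ent (bern (c / 2 ^ k)) idfun <= (INR k + 2) / 2 ^ k.
Proof.
move=> [c0 c1]; have k0 := pos_INR k; have [u0 u1] := inv_pow2_bounds k.
have head :
    - (c / 2 ^ k * log2 (c / 2 ^ k)) <= (c * INR k + 2 * (1 - c)) / 2 ^ k.
  have [{}c0|<-] := Rle_lt_or_eq_dec _ _ c0; last first.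
    by rewrite /Rdiv !Rmult_0_l Ropp_0; apply: Rmult_le_pos; lra.
  rewrite log2_div_pow2 // /Rdiv.
  have := @neg_xlog2x_le c; nra.
have tail : - ((1 - c / 2 ^ k) * log2 (1 - c / 2 ^ k)) <= 2 * (c / 2 ^ k).
  by apply: Rle_trans (neg_xlog2x_le _) _; rewrite /Rdiv; nra.
have ck : c * INR k <= INR k by nra.
rewrite ent_bern; move: head tail; rewrite /Rdiv; nra.
Qed.

Lemma pow2_growth k : (INR k + 2) * (INR k + 1) <= 4 * 2 ^ k.
Proof.
elim: k => [|[|k] IH]; rewrite ?S_INR /=; try lra.
by rewrite !S_INR /= in IH *; have := pos_INR k; nra.
Qed.

Lemma ent_bern_vanishes t eps :
  0 <= t <= 1 -> 0 < eps -> exists k, ent (bern (t / 2 ^ k)) idfun < eps.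
Proof.
move=> t01 eps0; have [k k_gt] := INR_unbounded (4 / eps).
exists k; apply: Rle_lt_trans (ent_bern_le k t01) _.
have k1 : 0 < 2 ^ k by apply: pow_lt; lra.
have := pow2_growth k; have := pos_INR k.
have : 4 < eps * INR k.
  have := Rmult_lt_compat_l eps _ _ eps0 k_gt.
  by rewrite /Rdiv -Rmult_assoc (Rmult_comm eps) Rmult_assoc Rinv_r; lra.
move=> *; apply/(Rmult_lt_reg_r (2 ^ k)) => //.
rewrite /Rdiv Rmult_assoc Rinv_l; nra.
Qed.

Lemma almost_entropic_preimage (T1 T2 : finType) (phi : T1 -> T2)
  (g : {set T1} -> R) :
  almost_entropic g -> almost_entropic (fun B => g (phi @^-1: B)).
Proof.
move=> ag eps eps0; have [f [ef fg]] := ag eps eps0.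
exists (fun B : {set T2} => f (phi @^-1: B)).
by split; [exact: entropic_preimage|].
Qed.

Lemma almost_entropic_add (T : finType) (g1 g2 : {set T} -> R) :
  almost_entropic g1 -> almost_entropic g2 ->
  almost_entropic (fun A => g1 A + g2 A).
Proof.
move=> ag1 ag2 eps eps0.
have [f1 [ef1 fg1]] := ag1 (eps / 2) ltac:(lra).
have [f2 [ef2 fg2]] := ag2 (eps / 2) ltac:(lra).
exists (fun A => f1 A + f2 A); split=> [|A]; first exact: entropic_add.
have := fg1 A; have := fg2 A; move=> /Rabs_def2 [? ?] /Rabs_def2 [? ?].
by apply: Rabs_def1; lra.
Qed.

Lemma entropic_scale_approx (T : finType) (g : {set T} -> R) t eps :
  entropic g -> 0 <= t <= 1 -> 0 < eps ->
  exists f, entropic f /\ forall A, Rabs (f A - t * g A) < eps.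
Proof.
move=> eg t01 eps0; have [k ent_lt] := ent_bern_vanishes t01 eps0.
have k0 : 0 < 2 ^ k by apply: pow_lt; lra.
have [O [p [xi [dp E]]]] := entropic_pow2 k eg.
have dq : distribution (bern (t / 2 ^ k)).
  have [? ?] := inv_pow2_bounds k.
  by apply: distribution_bern; rewrite /Rdiv; nra.
pose xis b := if b then xi else fun (_ : T) (_ : O) => 0%nat.
have := entropic_mixture xis dq dp; set f := fun B => _ => ef.
exists f; split=> // A; rewrite /f; case: ifP => [/eqP ->|_].
  by rewrite (entropic_set0 eg) Rmult_0_r Rminus_0_r Rabs_R0.
rewrite big_bool /= -E [entropy p _ A]entropyE (ent_const dp) => [|w w'];
  last exact/eq_joint.
have -> : t / 2 ^ k * (2 ^ k * g A) = t * g A by field; lra.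
rewrite Rmult_0_r Rplus_0_r /Rminus Rplus_assoc Rplus_opp_r Rplus_0_r.
by rewrite Rabs_pos_eq //; apply: ent_ge0.
Qed.

Lemma almost_entropic_scale (T : finType) (g : {set T} -> R) t :
  0 <= t <= 1 -> almost_entropic g -> almost_entropic (fun A => t * g A).
Proof.
move=> t01 ag eps eps0.
have [g1 [eg1 g1g]] := ag (eps / 2) ltac:(lra).
have [f [ef fg1]] := entropic_scale_approx eg1 t01 (eps := eps / 2) ltac:(lra).
exists f; split=> // A.
have := fg1 A; have := g1g A; move=> /Rabs_def2 [? ?] /Rabs_def2 [? ?].
by apply: Rabs_def1; nra.
Qed.

Lemma polymatroid_preimage (T1 T2 : finType) (f : T1 -> T2) (h : {set T1} -> R) :
  polymatroid h -> polymatroid (fun X => h (f @^-1: X)).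
Proof.
move=> [h0 h_ge0 h_mono h_sub]; split=> [|A|A B AB|A B].
- by rewrite preimset0.
- exact: h_ge0.
- exact/h_mono/preimsetS.
- by rewrite preimsetU preimsetI.
Qed.

Lemma polymatroid_conic (T : finType) (h1 h2 : {set T} -> R) c1 c2 :
  0 <= c1 -> 0 <= c2 -> polymatroid h1 -> polymatroid h2 ->
  polymatroid (fun X => c1 * h1 X + c2 * h2 X).
Proof.
move=> c1_ge0 c2_ge0 [h10 h1_ge0 h1_mono h1_sub] [h20 h2_ge0 h2_mono h2_sub].
split=> [|A|A B AB|A B].
- by rewrite h10 h20; ring.
- by have := h1_ge0 A; have := h2_ge0 A; nra.
- by have := h1_mono _ _ AB; have := h2_mono _ _ AB; nra.
- by have := h1_sub A B; have := h2_sub A B; nra.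
Qed.

Lemma convex_weight a1 a2 :
  0 <= a1 -> 0 <= a2 -> exists t, [/\ 0 <= t, t <= 1 & a1 = t * (a1 + a2)].
Proof.
move=> a1_ge0 a2_ge0.
have [s_gt0|s0] := Rle_lt_or_eq_dec 0 (a1 + a2) ltac:(lra); last first.
  by exists 0; split; lra.
exists (a1 / (a1 + a2)).
have : a1 / (a1 + a2) * (a1 + a2) = a1 by field; lra.
by split; nra.
Qed.

Lemma preimset_cancel (T1 T2 : finType) (f : T1 -> T2) (g : T2 -> T1)
  (B : {set T1}) :
  cancel f g -> f @^-1: (g @^-1: B) = B.
Proof. by move=> fK; apply/setP => x; rewrite !inE fK. Qed.

Section SplitElement.

Variables (M : finType) (a : M).

(* Some sends a to a1 = Some a, into_a2 sends it to a2 = None. *)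
Definition into_a2 (x : M) : option M := if x == a then None else Some x.

Lemma into_a2K : cancel into_a2 (collapse a).
Proof. by move=> x; rewrite /into_a2; case: eqP. Qed.

Variables (h : {set M} -> R) (t : R).

Definition split_rank (X : {set option M}) : R :=
  t * h (Some @^-1: X) + (1 - t) * h (into_a2 @^-1: X).

Lemma factor_split_rank B : factor (collapse a) split_rank B = h B.
Proof.
by rewrite /factor /split_rank !preimset_cancel //; [ring|apply: into_a2K].
Qed.

Lemma split_rank_a1 : h set0 = 0 -> split_rank [set Some a] = t * h [set a].
Proof.
move=> h0; rewrite /split_rank; have -> : Some @^-1: [set Some a] = [set a].
  by apply/setP => x; rewrite !inE.
have -> : into_a2 @^-1: [set Some a] = set0.
  by apply/setP => x; rewrite !inE /into_a2; case: ifP => //= ->.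
by rewrite h0 Rmult_0_r Rplus_0_r.
Qed.

Lemma split_rank_a2 : h set0 = 0 -> split_rank [set None] = (1 - t) * h [set a].
Proof.
move=> h0; rewrite /split_rank; have -> : Some @^-1: [set None] = set0 :> {set M}.
  by apply/setP => x; rewrite !inE.
have -> : into_a2 @^-1: [set None] = [set a].
  by apply/setP => x; rewrite !inE /into_a2; case: ifP.
by rewrite h0 Rmult_0_r Rplus_0_l.
Qed.

Hypothesis t01 : 0 <= t <= 1.

Lemma polymatroid_split_rank : polymatroid h -> polymatroid split_rank.
Proof.
by move=> hpm; apply: polymatroid_conic; try lra; apply: polymatroid_preimage.
Qed.

Lemma almost_entropic_split_rank :
  almost_entropic h -> almost_entropic split_rank.
Proof.
move=> ah; apply: almost_entropic_add; apply: almost_entropic_scale;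
  try lra; exact: almost_entropic_preimage.
Qed.

End SplitElement.

Theorem lemma2p10 (M : finType) (h : {set M} -> R) (a : M) (alpha1 alpha2 : R) :
  polymatroid h ->
  (0 <= alpha1)%R -> (0 <= alpha2)%R -> (alpha1 + alpha2 = h [set a])%R ->
  exists h' : {set option M} -> R,
    [/\ polymatroid h',
        h' [set Some a] = alpha1,
        h' [set None] = alpha2,
        (forall B : {set M}, h B = factor (collapse a) h' B) &
        (almost_entropic h <-> almost_entropic h')].
Proof.
move=> hpm alpha1_ge0 alpha2_ge0 alpha_sum.
have [t [t_ge0 t_le1 alpha1E]] := convex_weight alpha1_ge0 alpha2_ge0.
have t01 : 0 <= t <= 1 by [].
have h0 : h set0 = 0 by case: hpm.
exists (split_rank a h t); split.
- exact: polymatroid_split_rank.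
- by rewrite split_rank_a1 // -alpha_sum.
- by rewrite split_rank_a2 // -alpha_sum; lra.
- by move=> B; rewrite factor_split_rank.
split=> [|ah']; first exact: almost_entropic_split_rank.
rewrite -(functional_extensionality _ _ (factor_split_rank a h t)).
exact: almost_entropic_preimage.
Qed.
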